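(* A topological space $X$ is $H^*$-$T_{1/2}$ if and only if for each $x\in X$ the singleton $\{x\}$ is $H^*$-open or $H^*$-closed in $X$.
   Context: Let $(X,\tau)$ be a topological space, with closure $\mathrm{cl}$ and interior $\mathrm{int}$. A set $A\subseteq X$ is semi-open if $A\subseteq\mathrm{cl}(\mathrm{int}(A))$; semi-closed if its complement is semi-open; $\mathrm{scl}(A)$ is the intersection of all semi-closed sets containing $A$. $A$ is $w$-closed if $\mathrm{cl}(A)\subseteq U$ whenever $A\subseteq U$ and $U$ is semi-open; $w$-open if its complement is $w$-closed. $A$ is $h$-closed if $\mathrm{scl}(A)\subseteq U$ whenever $A\subseteq U$ and $U$ is $w$-open; $h\text{-}\mathrm{cl}(A)$ is the intersection of all $h$-closed sets containing $A$. $A$ is an $\alpha^*$-set if $\mathrm{int}(\mathrm{cl}(\mathrm{int}(A)))=\mathrm{int}(A)$, and a $C$-set if $A=U\cap V$ with $U$ open and $V$ an $\alpha^*$-set. $A$ is $hCg$-closed if $h\text{-}\mathrm{cl}(A)\subseteq U$ whenever $A\subseteq U$ and $U$ is a $C$-set; $hCg$-open if its complement is $hCg$-closed. $A$ is $H^*$-closed if $h\text{-}\mathrm{cl}(A)\subseteq U$ whenever $A\subseteq U$ and $U$ is $hCg$-open; $H^*$-open if its complement is $H^*$-closed; $H^*\text{-}\mathrm{cl}(A)$ is the intersection of all $H^*$-closed sets containing $A$. $A$ is $gH^*$-closed if $H^*\text{-}\mathrm{cl}(A)\subseteq U$ whenever $A\subseteq U$ and $U$ is $H^*$-open. $X$ is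 $H^*$-$T_{1/2}$ if every $gH^*$-closed subset of $X$ is $H^*$-closed. *)

From HB Require Import structures.
From mathcomp Require Import all_boot all_order.
From mathcomp Require Import boolp classical_sets topology.
Set Implicit Arguments. Unset Strict Implicit. Unset Printing Implicit Defensive.
Local Open Scope classical_set_scope.

Section HStar.
Variable T : topologicalType.

Definition gen_cl (P : set T -> Prop) (A : set T) : set T :=
  \bigcap_(F in [set F | P F /\ A `<=` F]) F.

Definition semi_open (A : set T) : Prop := A `<=` closure (interior A).
Definition semi_closed (A : set T) : Prop := semi_open (~` A).
Definition scl (A : set T) : set T := gen_cl semi_closed A.

Definition w_closed (A : set T) : Prop :=
  forall U, A `<=` U -> semi_open U -> closure A `<=` U.
Definition w_open (A : set T) : Prop := w_closed (~` A).

Definition h_closed (A : set T) : Prop :=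
  forall U, A `<=` U -> w_open U -> scl A `<=` U.
Definition h_cl (A : set T) : set T := gen_cl h_closed A.

Definition alpha_star_set (A : set T) : Prop :=
  interior (closure (interior A)) = interior A.
Definition C_set (A : set T) : Prop :=
  exists U V, open U /\ alpha_star_set V /\ A = U `&` V.

Definition hCg_closed (A : set T) : Prop :=
  forall U, A `<=` U -> C_set U -> h_cl A `<=` U.
Definition hCg_open (A : set T) : Prop := hCg_closed (~` A).

Definition Hstar_closed (A : set T) : Prop :=
  forall U, A `<=` U -> hCg_open U -> h_cl A `<=` U.
Definition Hstar_open (A : set T) : Prop := Hstar_closed (~` A).
Definition Hstar_cl (A : set T) : set T := gen_cl Hstar_closed A.

Definition gHstar_closed (A : set T) : Prop :=
  forall U, A `<=` U -> Hstar_open U -> Hstar_cl A `<=` U.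

Definition Hstar_T12 : Prop :=
  forall A : set T, gHstar_closed A -> Hstar_closed A.
End HStar.

From mathcomp Require Import all_boot boolp classical_sets topology.
Local Open Scope classical_set_scope.

(* Let A be gH*-closed, U a hCg-open superset of A and y a point of h_cl A.
   If {y} is closed, X \ {y} is hCg-open, and the hypothesis on {y} yields an
   H*-closed F containing A but not y; then h_cl A is inside h_cl F, which lies
   in X \ {y}.  If {y} is not closed, y can lie outside U only if {y} is
   w-closed; then K = cl {y} is open and indiscrete, so every semi-open set
   meeting K contains K.  A point b of A in K then belongs to h_cl (X \ U),
   while X \ {b} is a C-set containing X \ U, against the hCg-openness of U;
   and A cannot avoid K, as X \ K is a closed superset of A.
   Conversely, the only supersets of X \ {x} are X and X \ {x} itself. *)

Set Implicit Arguments. Unset Strict Implicit.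

Section HStarT12.
Context {T : topologicalType}.
Implicit Types (A B F S U V : set T) (b u v x y : T).

Lemma gen_clS (P : set T -> Prop) A B : A `<=` B -> gen_cl P A `<=` gen_cl P B.
Proof. by move=> AB x Ax F [PF BF]; apply: Ax; split=> //; exact: subset_trans BF. Qed.

Lemma notin_gen_cl (P : set T -> Prop) A x :
  ~ gen_cl P A x -> exists F, [/\ P F, A `<=` F & ~ F x].
Proof.
move=> nAx; apply: contrapT => noF; apply: nAx => F [PF AF].
by apply: contrapT => nFx; apply: noF; exists F.
Qed.

Lemma closure_sub_closed S F : closed F -> S `<=` F -> closure S `<=` F.
Proof. by move=> cF SF; rewrite closureE; exact: smallest_sub. Qed.

Lemma setC1_supset x U : ~` [set x] `<=` U -> U = setT \/ U = ~` [set x].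
Proof.
move=> xU; have [Ux|nUx] := pselect (U x); [left|right]; apply/seteqP; split=> //.
  by move=> z _; have [->|zx] := pselect (z = x); last exact: xU.
by move=> z Uz zx; apply: nUx; rewrite -zx.
Qed.

Lemma open_semi_open S : open S -> semi_open S.
Proof. by move=> /interior_id oS x Sx; apply: subset_closure; rewrite oS. Qed.

Lemma nowhere_dense_semi_openC S : interior (closure S) = set0 -> semi_open (~` S).
Proof. by move=> S0 x _; rewrite interiorC closure_setC S0. Qed.

Lemma closed_h_closed F : closed F -> h_closed F.
Proof.
move=> cF U FU _; apply: subset_trans FU; apply: smallest_sub => //.
exact/open_semi_open/closed_openC.
Qed.

Lemma h_cl_closed F : closed F -> h_cl F `<=` F.
Proof. by move=> cF; apply: smallest_sub => //; exact: closed_h_closed. Qed.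

Lemma closed_hCg_closed F : closed F -> hCg_closed F.
Proof. by move=> cF U FU _; exact: subset_trans (h_cl_closed cF) FU. Qed.

Lemma alpha_star_C_set V : alpha_star_set V -> C_set V.
Proof. by move=> aV; exists setT, V; rewrite setTI; split=> //; exact: openT. Qed.

(* The interior of [~` [set b]] is the clopen set [~` closure [set b]]. *)
Lemma alpha_star_setC1 b : open (closure [set b]) -> alpha_star_set (~` [set b]).
Proof.
move=> oK; rewrite /alpha_star_set interiorC.
have cK : closed (~` closure [set b]) by exact: open_closedC.
by rewrite -(closure_id _).1 //; apply/interior_id/closed_openC/closed_closure.
Qed.

(* If [~` [set y]] were h-closed it would contain [h_cl A]. *)
Lemma w_closed1_of_h_cl A y : h_cl A y -> ~ A y -> w_closed [set y].
Proof.
move=> hAy nAy; apply: contrapT => nwy.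
have hyC : h_closed (~` [set y]).
  move=> V yV; have [->|->] := setC1_supset yV; first by [].
  by rewrite /w_open setCK.
by apply: (smallest_sub hyC _ hAy) => // x Ax xy; apply: nAy; rewrite -xy.
Qed.

Section WClosedPoint.
Variables (y : T) (wy : w_closed [set y]).

Lemma closure1_sym v : closure [set y] v -> closure [set v] y.
Proof.
move=> yv; apply: contrapT => nvy.
have oV : open (~` closure [set v]) by exact/closed_openC/closed_closure.
have yV : [set y] `<=` ~` closure [set v] by move=> _ ->.
by apply: (wy yV (open_semi_open oV) yv); exact: subset_closure.
Qed.

Lemma closure1_indiscrete u v :
  closure [set y] u -> closure [set y] v -> closure [set v] u.
Proof.
move=> yu /closure1_sym vy; apply: closure_sub_closed yu.
  exact: closed_closure.
by move=> _ ->.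
Qed.

(* A second point [z] of [closure [set y]] cannot have a semi-open complement,
   so [closure [set z] = closure [set y]] is not nowhere dense. *)
Lemma open_closure1 : ~ closed [set y] -> open (closure [set y]).
Proof.
move=> ncy.
have [z yz zy] : exists2 z, closure [set y] z & z <> y.
  apply: contrapT => noz; apply: ncy => z yz.
  by apply: contrapT => zy; apply: noz; exists z.
have [x Kx] : (closure [set y])° !=set0.
  apply/set0P/negP => /eqP K0.
  have zK : closure [set z] `<=` closure [set y].
    by apply: closure_sub_closed => [|_ ->]; [exact: closed_closure|].
  have z0 : (closure [set z])° = set0 by rewrite -subset0 -K0; exact: interiorS.
  have yz' : [set y] `<=` ~` [set z] by move=> _ -> /esym.
  exact: (wy yz' (nowhere_dense_semi_openC z0) yz).
rewrite openE => v yv.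
have [w [-> //]] := closure1_indiscrete (interior_subset Kx) yv
  (open_nbhs_nbhs (conj (@open_interior _ _) Kx)).
Qed.

End WClosedPoint.

Section IndiscreteClopen.
Variables (K : set T) (oK : open K) (cK : closed K).
Hypothesis K_indiscrete : forall u v, K u -> K v -> closure [set v] u.

Lemma semi_open_indiscrete V u : semi_open V -> K u -> V u -> K `<=` V.
Proof.
move=> sV Ku Vu v Kv.
have [c [Vc Kc]] := sV u Vu K (open_nbhs_nbhs (conj oK Ku)).
have [_ [-> Vv]] := K_indiscrete Kc Kv (open_nbhs_nbhs (conj (@open_interior _ V) Vc)).
exact: interior_subset.
Qed.

Lemma w_closed1_indiscrete b : K b -> w_closed [set b].
Proof.
move=> Kb V bV sV; apply: subset_trans (semi_open_indiscrete sV Kb (bV b erefl)).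
by apply: closure_sub_closed => // _ ->.
Qed.

Lemma h_cl_indiscrete B b y : K b -> K y -> B y -> h_cl B b.
Proof.
move=> Kb Ky By G [hG BG]; apply: contrapT => nGb.
have GC : G `<=` ~` [set b] by move=> x Gx xb; apply: nGb; rewrite -xb.
have wb : w_open (~` [set b]) by rewrite /w_open setCK; exact: w_closed1_indiscrete.
apply: (hG _ GC wb b _ erefl) => S [sS GS]; apply: contrapT => nSb.
by apply: (semi_open_indiscrete sS Kb nSb Ky); apply/GS/BG.
Qed.

Lemma hCg_open_indiscrete U A y :
  hCg_open U -> A `<=` U -> h_cl A y -> K y -> U y.
Proof.
move=> hU AU hAy Ky; apply: contrapT => nUy.
have [[b [Ab Kb]]|nAK] := pselect (exists b, A b /\ K b).
  have UC : ~` U `<=` ~` [set b] by move=> x nUx xb; apply/nUx/AU; rewrite xb.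
  have Kcl : closure [set b] = K.
    apply/seteqP; split; first by apply: closure_sub_closed => // _ ->.
    by move=> v Kv; exact: K_indiscrete.
  have Cb : C_set (~` [set b]) by apply/alpha_star_C_set/alpha_star_setC1; rewrite Kcl.
  exact: (hU _ UC Cb b (h_cl_indiscrete Kb Ky nUy) erefl).
have AK : A `<=` ~` K by move=> x Ax Kx; apply: nAK; exists x.
exact: (smallest_sub (closed_h_closed (open_closedC oK)) AK hAy).
Qed.

End IndiscreteClopen.

Lemma hCg_open_h_cl_nonclosed U A y :
  hCg_open U -> A `<=` U -> h_cl A y -> ~ closed [set y] -> U y.
Proof.
move=> hU AU hAy ncy; apply: contrapT => nUy.
have wy := w_closed1_of_h_cl hAy (fun Ay => nUy (AU y Ay)).
apply/nUy/(hCg_open_indiscrete (open_closure1 wy ncy) (@closed_closure _ _)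
  (closure1_indiscrete wy) hU AU hAy).
exact: subset_closure.
Qed.

Lemma notin_Hstar_cl A y : Hstar_open [set y] \/ Hstar_closed [set y] ->
  gHstar_closed A -> ~ A y -> ~ Hstar_cl A y.
Proof.
move=> Hy gA nAy; have AC : A `<=` ~` [set y] by move=> x Ax xy; apply: nAy; rewrite -xy.
case: Hy => [Hy|Hy] HAy.
  exact: (smallest_sub (C := @Hstar_closed T) Hy AC HAy erefl).
have Ho : Hstar_open (~` [set y]) by rewrite /Hstar_open setCK.
exact: (gA _ AC Ho y HAy erefl).
Qed.

Lemma notin_h_cl_closed1 A y : closed [set y] -> ~ Hstar_cl A y -> ~ h_cl A y.
Proof.
move=> cy /notin_gen_cl [F [HF AF nFy]] hAy.
have FC : F `<=` ~` [set y] by move=> x Fx xy; apply: nFy; rewrite -xy.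
have hCy : hCg_open (~` [set y]) by rewrite /hCg_open setCK; exact: closed_hCg_closed.
exact: (HF _ FC hCy y (gen_clS AF hAy) erefl).
Qed.

End HStarT12.

Theorem theorem5p2 (T : topologicalType) :
  Hstar_T12 T <->
  (forall x : T, Hstar_open [set x] \/ Hstar_closed [set x]).
Proof.
split.
  move=> HT x; have [|Hx] := pselect (Hstar_closed [set x]); [by right|left].
  apply: HT => U xU; case: (setC1_supset xU) => -> // .
  by rewrite /Hstar_open setCK => /Hx.
move=> Hpt A gA U AU hU y hAy.
have [cy|ncy] := pselect (closed [set y]); last first.
  exact: (hCg_open_h_cl_nonclosed hU AU hAy ncy).
apply: contrapT => nUy.
have nAy : ~ A y by move=> Ay; exact/nUy/AU.
exact: (notin_h_cl_closed1 cy (notin_Hstar_cl (Hpt y) gA nAy) hAy).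
Qed.
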